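(* Let $n\ge1$ and let $\Phi:\mathbb{R}^{n+1}\to[0,+\infty)$ be a norm with dual norm $\Phi^o$. Then $\Phi(\widehat\xi,\xi_{n+1})\ge\Phi(\widehat\xi,0)$ for all $(\widehat\xi,\xi_{n+1})\in\mathbb{R}^n\times\mathbb{R}$ if and only if $\Phi^o(\widehat\xi^*,\xi^*_{n+1})\ge\Phi^o(\widehat\xi^*,0)$ for all $(\widehat\xi^*,\xi^*_{n+1})\in\mathbb{R}^n\times\mathbb{R}$.
   Context: A norm on $\mathbb{R}^m$ is a convex function $\Psi:\mathbb{R}^m\to[0,+\infty)$ with $\Psi(\lambda\xi)=|\lambda|\Psi(\xi)$ and $\Psi(\xi)\ge c|\xi|$ for some $c>0$; its dual norm is $\Psi^o(\xi^* )=\sup\{\xi^*\cdot\xi:\Psi(\xi)\le1\}$. (The stated property of $\Phi$ is what the paper calls ''$\partial B_\Phi$ is a generalized graph in the vertical direction''.) *)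

From HB Require Import structures.
From mathcomp Require Import all_boot all_order all_algebra.
From mathcomp Require Import boolp classical_sets reals.
Set Implicit Arguments. Unset Strict Implicit. Unset Printing Implicit Defensive.
Import Order.TTheory GRing.Theory Num.Theory.
Local Open Scope ring_scope.
Local Open Scope classical_set_scope.

Definition dotv (R : realType) (m : nat) (x y : 'rV[R]_m) : R :=
  \sum_(i < m) x ord0 i * y ord0 i.

Definition eucl (R : realType) (m : nat) (x : 'rV[R]_m) : R :=
  Num.sqrt (dotv x x).

Definition is_norm (R : realType) (m : nat) (Psi : 'rV[R]_m -> R) : Prop :=
  [/\ (forall x, 0 <= Psi x),
      (forall (l : R) x y, 0 <= l <= 1 ->
          Psi (l *: x + (1 - l) *: y) <= l * Psi x + (1 - l) * Psi y),
      (forall (l : R) x, Psi (l *: x) = `|l| * Psi x) &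
      (exists2 c : R, 0 < c & forall x, c * eucl x <= Psi x)].

Definition dual_norm (R : realType) (m : nat) (Psi : 'rV[R]_m -> R)
  (xs : 'rV[R]_m) : R :=
  sup [set dotv xs x | x in [set x | Psi x <= 1]].

Definition pt (R : realType) (n : nat) (xh : 'rV[R]_n) (t : R) : 'rV[R]_(n + 1) :=
  row_mx xh (\row_(j < 1) t).

(* The forward implication is a direct estimate of the supremum defining
   Phi^o(b, 0): it pairs only with the first block a of a vector (a, t), and
   Phi(a, 0) <= Phi(a, t) <= 1.  For the converse take, by Hahn-Banach, a
   linear functional (b, s) <= Phi with value Phi(a, 0) at (a, 0).  Then
   Phi^o(b, 0) <= Phi^o(b, s) <= 1, so Phi(a, 0) = (b, 0).(a, t) <= Phi(a, t).
   The finite-dimensional Hahn-Banach theorem is proved by replacing a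
   sublinear p by x |-> inf_t (p(x + t e) - t p(e)), which stays sublinear and
   below p, becomes linear along e, and keeps every direction along which p
   was already linear; doing this for z and then for a basis leaves a linear
   minorant of p that agrees with p at z. *)

From HB Require Import structures.
From mathcomp Require Import all_boot all_order all_algebra.
From mathcomp Require Import boolp classical_sets reals.
From mathcomp Require Import ring lra.
Set Implicit Arguments.
Unset Strict Implicit.
Unset Printing Implicit Defensive.
Import Order.TTheory GRing.Theory Num.Theory.
Local Open Scope ring_scope.
Local Open Scope classical_set_scope.

Section Sublinear.
Variables (R : realType) (m : nat).
Implicit Types (p q : 'rV[R]_m -> R) (x y e : 'rV[R]_m) (l s t c : R).

Definition sublinear p :=
  (forall x y, p (x + y) <= p x + p y) /\
  (forall l x, 0 <= l -> p (l *: x) = l * p x).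

Definition linear_along p e c := forall x t, p (x + t *: e) = p x + t * c.

Lemma sublinear0 p : sublinear p -> p 0 = 0.
Proof. by case=> _ hom; rewrite -(scale0r (0 : 'rV[R]_m)) hom // mul0r. Qed.

Lemma sublinear_scale_ge p e t : sublinear p -> t * p e <= p (t *: e).
Proof.
move=> hp; have [t0|t0] := leP 0 t; first by rewrite hp.2.
have := hp.1 (t *: e) (- (t *: e)).
have -> : p (- (t *: e)) = - t * p e by rewrite -scaleNr hp.2 // oppr_ge0 ltW.
rewrite subrr sublinear0 //; lra.
Qed.

Lemma sublinear_shift_ge p x e t : sublinear p ->
  - p (- x) <= p (x + t *: e) - t * p e.
Proof.
move=> hp; have := sublinear_scale_ge e t hp.
have := hp.1 (x + t *: e) (- x); rewrite addrAC subrr add0r; lra.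
Qed.

Lemma linear_along_slope q e c : sublinear q -> linear_along q e c -> c = q e.
Proof. by move=> hq /(_ 0 1); rewrite scale1r add0r sublinear0 // add0r mul1r. Qed.

(* The largest minorant of [p] with slope [p e] along [e]; the infimum is
   finite by [sublinear_shift_ge]. *)
Definition linearize_along p e x :=
  inf (range (fun t => p (x + t *: e) - t * p e)).

Section LinearizeAlong.
Variables (p : 'rV[R]_m -> R) (e : 'rV[R]_m).
Hypothesis p_sublinear : sublinear p.

Lemma linearize_along_le_shift x t :
  linearize_along p e x <= p (x + t *: e) - t * p e.
Proof.
apply: ge_inf; last by exists t.
by exists (- p (- x)) => _ [u _ <-]; apply: sublinear_shift_ge.
Qed.

Lemma linearize_along_ge x a :
  (forall t, a <= p (x + t *: e) - t * p e) -> a <= linearize_along p e x.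
Proof.
move=> lb; apply: lb_le_inf; last by move=> _ [t _ <-].
by exists (p (x + 0 *: e) - 0 * p e), 0.
Qed.

Lemma linearize_along_le x : linearize_along p e x <= p x.
Proof. by have := linearize_along_le_shift x 0; rewrite scale0r addr0 mul0r subr0. Qed.

Lemma linearize_along_subadditive x y :
  linearize_along p e (x + y) <= linearize_along p e x + linearize_along p e y.
Proof.
rewrite -lerBlDr; apply: linearize_along_ge => t1.
rewrite lerBlDr -lerBlDl; apply: linearize_along_ge => t2; rewrite lerBlDl.
apply: (le_trans (linearize_along_le_shift _ (t1 + t2))).
have := p_sublinear.1 (x + t1 *: e) (y + t2 *: e).
by rewrite scalerDl addrACA; lra.
Qed.

Lemma linearize_along0 : linearize_along p e 0 = 0.
Proof.
apply/eqP; rewrite eq_le -{1}(sublinear0 p_sublinear) linearize_along_le /=.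
apply: linearize_along_ge => t.
by have := sublinear_shift_ge 0 e t p_sublinear; rewrite oppr0 sublinear0 // oppr0.
Qed.

Lemma linearize_alongZ l x : 0 <= l ->
  linearize_along p e (l *: x) = l * linearize_along p e x.
Proof.
rewrite le_eqVlt => /predU1P[<-|l0]; first by rewrite scale0r mul0r linearize_along0.
apply/eqP; rewrite eq_le; apply/andP; split.
  rewrite -ler_pdivrMl //; apply: linearize_along_ge => t.
  rewrite ler_pdivrMl //; apply: (le_trans (linearize_along_le_shift _ (l * t))).
  by rewrite -scalerA -scalerDr (p_sublinear.2 _ _ (ltW l0)); lra.
apply: linearize_along_ge => u.
have -> : l *: x + u *: e = l *: (x + (u / l) *: e).
  by rewrite scalerDr scalerA mulrCA divff ?gt_eqF // mulr1.
rewrite (p_sublinear.2 _ _ (ltW l0)).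
apply: (le_trans (ler_wpM2l (ltW l0) (linearize_along_le_shift x (u / l)))).
by rewrite mulrBr mulrA mulrCA divff ?gt_eqF // mulr1.
Qed.

Lemma linearize_along_sublinear : sublinear (linearize_along p e).
Proof. by split=> *; [exact: linearize_along_subadditive | exact: linearize_alongZ]. Qed.

Lemma linearize_along_linear_along : linear_along (linearize_along p e) e (p e).
Proof.
move=> x s; apply/eqP; rewrite eq_le; apply/andP; split.
  rewrite -lerBlDr; apply: linearize_along_ge => t; rewrite lerBlDr.
  apply: (le_trans (linearize_along_le_shift _ (t - s))).
  by rewrite -addrA -scalerDl addrCA subrr addr0; lra.
apply: linearize_along_ge => u.
by have := linearize_along_le_shift x (s + u); rewrite -addrA -scalerDl; lra.
Qed.

Lemma linearize_along_preserves e' c :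
  linear_along p e' c -> linear_along (linearize_along p e) e' c.
Proof.
move=> hc x t; apply/eqP; rewrite eq_le; apply/andP; split.
  rewrite -lerBlDr; apply: linearize_along_ge => u; rewrite lerBlDr.
  by apply: (le_trans (linearize_along_le_shift _ u)); rewrite addrAC hc; lra.
apply: linearize_along_ge => u.
by have := linearize_along_le_shift x u; rewrite addrAC hc; lra.
Qed.

End LinearizeAlong.

Lemma sublinear_minorant_linear_along (s : seq 'rV[R]_m) p : sublinear p ->
  exists q, [/\ sublinear q, (forall x, q x <= p x),
    (forall e c, linear_along p e c -> linear_along q e c) &
    (forall e, e \in s -> linear_along q e (q e))].
Proof.
elim: s p => [|e s IH] p hp; first by exists p; split.
have [q [hq qle qpres qlin]] := IH _ (linearize_along_sublinear e hp).
exists q; split=> //.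
- by move=> x; apply: le_trans (qle x) (linearize_along_le e hp x).
- by move=> e' c hc; apply/qpres/linearize_along_preserves.
move=> e'; rewrite inE => /predU1P[->|]; last exact: qlin.
have qe := qpres _ _ (linearize_along_linear_along e hp).
by rewrite -(linear_along_slope hq qe).
Qed.

Lemma linear_along_basis_dotv q : sublinear q ->
  (forall i, linear_along q (delta_mx 0 i) (q (delta_mx 0 i))) ->
  forall x, q x = dotv (\row_i q (delta_mx 0 i)) x.
Proof.
move=> hq qlin x; rewrite {1}(row_sum_delta x) /dotv.
apply: (big_rec2 (fun a b => q a = b)); first exact: sublinear0.
by move=> i a b _ <-; rewrite addrC qlin mxE mulrC addrC.
Qed.

Theorem hahn_banach p z : sublinear p ->
  exists y, (forall x, dotv y x <= p x) /\ dotv y z = p z.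
Proof.
move=> hp; have hpz := linearize_along_sublinear z hp.
have [q [hq qle qpres qlin]] :=
  sublinear_minorant_linear_along [seq delta_mx 0 i | i <- enum 'I_m] hpz.
have qdotv := linear_along_basis_dotv hq
  (fun i => qlin _ (map_f _ (mem_enum _ i))).
have qz := qpres _ _ (linearize_along_linear_along z hp).
exists (\row_i q (delta_mx 0 i)); split=> [x|].
  by rewrite -qdotv; apply: le_trans (qle x) (linearize_along_le z hp x).
by rewrite -qdotv (linear_along_slope hq qz).
Qed.

End Sublinear.

Lemma norm_sublinear (R : realType) (m : nat) (Phi : 'rV[R]_m -> R) :
  is_norm Phi -> sublinear Phi.
Proof.
case=> _ convex hom _; split=> [x y|l x l0]; last by rewrite hom ger0_norm.
have half_01 : 0 <= (2^-1 : R) <= 1 by rewrite invr_ge0 invf_le1; lra.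
have := convex _ (2 *: x) (2 *: y) half_01.
have -> : 1 - 2^-1 = 2^-1 :> R by field.
rewrite !scalerA mulVf ?pnatr_eq0 // !scale1r !hom ger0_norm //.
by rewrite !mulrA mulVf ?pnatr_eq0 // !mul1r.
Qed.

Lemma dotv_le_eucl (R : realType) (m : nat) (y x : 'rV[R]_m) :
  dotv y x <= (\sum_(i < m) `|y 0 i|) * eucl x.
Proof.
rewrite /dotv mulr_suml; apply: ler_sum => i _.
apply: (le_trans (ler_norm _)); rewrite normrM; apply: ler_wpM2l => //.
rewrite /eucl -sqrtr_sqr ler_wsqrtr // /dotv (bigD1 i) //= expr2 lerDl.
by apply: sumr_ge0 => j _; rewrite -expr2 sqr_ge0.
Qed.

Lemma dotvZ (R : realType) (m : nat) (y x : 'rV[R]_m) (a : R) :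
  dotv y (a *: x) = a * dotv y x.
Proof. by rewrite /dotv mulr_sumr; apply: eq_bigr => i _; rewrite mxE mulrCA. Qed.

Section DualNorm.
Variables (R : realType) (m : nat) (Phi : 'rV[R]_m -> R).
Hypothesis Phi_norm : is_norm Phi.

Lemma dotv_le_mul_norm (y : 'rV[R]_m) : exists K, forall x, dotv y x <= K * Phi x.
Proof.
case: Phi_norm => _ _ _ [c c0 coercive]; exists ((\sum_(i < m) `|y 0 i|) / c) => x.
apply: (le_trans (dotv_le_eucl y x)); rewrite -mulrA.
by apply: ler_wpM2l; [exact: sumr_ge0 | rewrite ler_pdivlMl // mulrC].
Qed.

Lemma dual_norm_ge (y x : 'rV[R]_m) : Phi x <= 1 -> dotv y x <= dual_norm Phi y.
Proof.
move=> Phix; apply: ub_le_sup; last by exists x.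
have [K dotvK] := dotv_le_mul_norm y; case: Phi_norm => Phi_ge0 _ _ _.
exists `|K| => _ [z /= Phiz <-]; apply: (le_trans (dotvK z)).
by apply: (le_trans (ler_norm _)); rewrite normrM ler_piMr // ger0_norm.
Qed.

Lemma dual_norm_le (y : 'rV[R]_m) (a : R) :
  (forall x, Phi x <= 1 -> dotv y x <= a) -> dual_norm Phi y <= a.
Proof.
move=> ub; apply: ge_sup; last by move=> _ [x /= Phix <-]; apply: ub.
by exists (dotv y 0), 0 => //=; rewrite (sublinear0 (norm_sublinear Phi_norm)).
Qed.

Lemma dotv_le_dual_norm (y x : 'rV[R]_m) : dotv y x <= dual_norm Phi y * Phi x.
Proof.
case: (Phi_norm) => Phi_ge0 _ _ _.
have [Phi0|Phi_neq0] := eqVneq (Phi x) 0.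
  by have [K dotvK] := dotv_le_mul_norm y; have := dotvK x; rewrite Phi0 !mulr0.
have Phi_gt0 : 0 < Phi x by rewrite lt0r Phi_neq0 Phi_ge0.
have := @dual_norm_ge y ((Phi x)^-1 *: x).
rewrite dotvZ (norm_sublinear Phi_norm).2 ?invr_ge0 // mulVf // lexx => /(_ isT).
by rewrite ler_pdivrMl // mulrC.
Qed.

End DualNorm.

Lemma dotv_pt (R : realType) (n : nat) (b a : 'rV[R]_n) (s t : R) :
  dotv (pt b s) (pt a t) = dotv b a + s * t.
Proof.
rewrite /dotv /pt big_split_ord /= big_ord1; congr (_ + _).
  by apply: eq_bigr => i _; rewrite !row_mxEl.
by rewrite !row_mxEr !mxE.
Qed.

Lemma pt_lsubmx_rsubmx (R : realType) (n : nat) (x : 'rV[R]_(n + 1)) :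
  x = pt (lsubmx x) (rsubmx x 0 0).
Proof.
rewrite /pt -{1}[x]hsubmxK; congr row_mx.
by apply/rowP => j; rewrite !mxE ord1.
Qed.

Section VerticalMonotonicity.
Variables (R : realType) (n : nat) (Phi : 'rV[R]_(n + 1) -> R).
Hypothesis Phi_norm : is_norm Phi.

Lemma dual_norm_vertical_ge :
  (forall xh t, Phi (pt xh 0) <= Phi (pt xh t)) ->
  forall xh t, dual_norm Phi (pt xh 0) <= dual_norm Phi (pt xh t).
Proof.
move=> Phi_vert b s; apply: dual_norm_le => // x Phix.
rewrite [x]pt_lsubmx_rsubmx dotv_pt mul0r addr0.
have -> : dotv b (lsubmx x) = dotv (pt b s) (pt (lsubmx x) 0).
  by rewrite dotv_pt mulr0 addr0.
apply: dual_norm_ge => //; apply: le_trans (Phi_vert _ (rsubmx x 0 0)) _.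
by rewrite -pt_lsubmx_rsubmx.
Qed.

Lemma norm_vertical_ge :
  (forall xh t, dual_norm Phi (pt xh 0) <= dual_norm Phi (pt xh t)) ->
  forall xh t, Phi (pt xh 0) <= Phi (pt xh t).
Proof.
move=> dual_vert a t; case: (Phi_norm) => Phi_ge0 _ _ _.
have [y [y_le_Phi y_supports]] := hahn_banach (pt a 0) (norm_sublinear Phi_norm).
have dual_y_le1 : dual_norm Phi y <= 1.
  by apply: dual_norm_le => // x Phix; apply: le_trans (y_le_Phi x) Phix.
move: y_supports dual_y_le1; rewrite [y]pt_lsubmx_rsubmx.
set b := lsubmx y; set s := rsubmx y 0 0 => <- dual_le1.
have -> : dotv (pt b s) (pt a 0) = dotv (pt b 0) (pt a t).
  by rewrite !dotv_pt mulr0 mul0r.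
apply: (le_trans (dotv_le_dual_norm Phi_norm _ _)).
by apply: ler_piMl => //; apply: le_trans (dual_vert b s) dual_le1.
Qed.

End VerticalMonotonicity.

Theorem lemmaA3 (R : realType) (n : nat) (Phi : 'rV[R]_(n + 1) -> R) :
  (1 <= n)%N -> is_norm Phi ->
  (forall (xh : 'rV[R]_n) (t : R), Phi (pt xh t) >= Phi (pt xh 0)) <->
  (forall (xh : 'rV[R]_n) (t : R),
      dual_norm Phi (pt xh t) >= dual_norm Phi (pt xh 0)).
Proof.
move=> _ Phi_norm.
by split; [exact: dual_norm_vertical_ge | exact: norm_vertical_ge].
Qed.
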